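(* Let $P$ be a prime and $D\ge1$. Let $g,r:\mathbb{Z}_P\to\mathbb{R}$ satisfy $\sum_{b\in\mathbb{Z}_P}g(b)=0$, $\sum_b|g(b)|^2=1$, $\sum_b|r(b)|^2=1$, and $C_{g,r}:=\sum_{v\in\mathbb{Z}_P}\mathcal{F}_1[g](v)\overline{\mathcal{F}_1[r](v)}\neq0$. Then for every function $f:\mathbb{Z}_P^D\to\mathbb{R}$ and every $\mathbf{x}\in\mathbb{Z}_P^D$, $$f(\mathbf{x})=C_{g,r}^{-1}\,\mathcal{S}\big[\mathcal{R}[f]\big](\mathbf{x}).$$
   Context: $\mathbb{Z}_P=\{0,\dots,P-1\}$ with arithmetic mod $P$. $\mathcal{F}_1[h](v)=P^{-1/2}\sum_{b\in\mathbb{Z}_P}h(b)e^{-2\pi i vb/P}$. The discrete ridgelet transform is $\mathcal{R}[f](\mathbf{a},b)=P^{-D/2}\sum_{\mathbf{x}\in\mathbb{Z}_P^D}f(\mathbf{x})\,r((\mathbf{a}^\top\mathbf{x}-b)\bmod P)$, and for $w:\mathbb{Z}_P^D\times\mathbb{Z}_P\to\mathbb{C}$ the discretized neural network is $\mathcal{S}[w](\mathbf{x})=P^{-D/2}\sum_{\mathbf{a}\in\mathbb{Z}_P^D,\,b\in\mathbb{Z}_P}w(\mathbf{a},b)\,g((\mathbf{a}^\top\mathbf{x}-b)\bmod P)$. *)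

From mathcomp Require Import all_boot all_order all_algebra.
From mathcomp Require Import reals trigo.
From mathcomp Require Import complex.
Set Implicit Arguments. Unset Strict Implicit. Unset Printing Implicit Defensive.
Import Order.TTheory GRing.Theory Num.Theory.
Local Open Scope ring_scope.
Local Open Scope complex_scope.

Definition expi (R : realType) (t : R) : R[i] := cos t +i* sin t.

Definition F1 (R : realType) (P : nat) (h : 'Z_P -> R[i]) (v : 'Z_P) : R[i] :=
  ((Num.sqrt (P%:R : R))^-1)%:C *
  \sum_(b : 'Z_P) h b * expi (- (2 * pi * ((v : nat) * (b : nat))%N%:R / P%:R)).

Definition Cgr (R : realType) (P : nat) (g r : 'Z_P -> R) : R[i] :=
  \sum_(v : 'Z_P) F1 (fun b => (g b)%:C) v * conjc (F1 (fun b => (r b)%:C) v).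

Definition dotZ (P D : nat) (a x : {ffun 'I_D -> 'Z_P}) : 'Z_P :=
  \sum_(i < D) a i * x i.

Definition ridgelet (R : realType) (P D : nat) (r : 'Z_P -> R)
  (f : {ffun 'I_D -> 'Z_P} -> R) (a : {ffun 'I_D -> 'Z_P}) (b : 'Z_P) : R :=
  ((Num.sqrt (P%:R : R)) ^+ D)^-1 *
  \sum_(x : {ffun 'I_D -> 'Z_P}) f x * r (dotZ a x - b).

Definition Snet (R : realType) (P D : nat) (g : 'Z_P -> R)
  (w : {ffun 'I_D -> 'Z_P} -> 'Z_P -> R) (x : {ffun 'I_D -> 'Z_P}) : R :=
  ((Num.sqrt (P%:R : R)) ^+ D)^-1 *
  \sum_(a : {ffun 'I_D -> 'Z_P}) \sum_(b : 'Z_P) w a b * g (dotZ a x - b).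

(* In S[R[f]](x) the kernel
   sum_(a,b) r(a.y - b) g(a.x - b) only depends on z = y - x and equals
   sum_a h(a.z) for the correlation h(s) = sum_c r(s + c) g(c).  For z <> 0 the
   linear form a |-> a.z is equidistributed on Z_P (P prime), so the kernel is
   a multiple of sum_s h(s) = (sum r)(sum g) = 0: only y = x survives and
   S[R[f]](x) = f(x) sum_b g(b) r(b).  On the other side, orthogonality of the
   characters b |-> e^(2 pi i v b / P) gives Plancherel's identity for F_1,
   hence C_{g,r} = sum_b g(b) r(b). *)

From mathcomp Require Import all_boot all_order all_algebra.
From mathcomp Require Import reals trigo complex.
From mathcomp Require Import ring.
Set Implicit Arguments. Unset Strict Implicit. Unset Printing Implicit Defensive.
Import Order.TTheory GRing.Theory Num.Theory.
Local Open Scope ring_scope.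

Lemma sum_correlation (V : pzRingType) (M : finZmodType) (F G : M -> V) :
  \sum_s \sum_c F (s + c) * G c = (\sum_s F s) * \sum_c G c.
Proof.
rewrite exchange_big mulr_sumr; apply: eq_bigr => c _.
by rewrite mulr_suml [RHS](reindex_inj (addIr c)).
Qed.

Lemma correlation_shift (V : pzRingType) (M : finZmodType) (F G : M -> V)
    (s t : M) :
  \sum_b F (s - b) * G (t - b) = \sum_c F (s - t + c) * G c.
Proof.
rewrite (reindex_inj (subrI t)); apply: eq_bigr => c _.
by rewrite subKr opprB addrA addrAC.
Qed.

Lemma inv_sqrtr_expr_sqr (R : rcfType) (n k : nat) :
  (Num.sqrt (n%:R : R) ^+ k)^-1 * (Num.sqrt (n%:R : R) ^+ k)^-1 = (n ^ k)%:R^-1.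
Proof. by rewrite -invfM -expr2 -exprM mulnC exprM sqr_sqrtr ?ler0n // natrX. Qed.

Lemma sum_expr_root_unity (F : idomainType) (n : nat) (q : F) :
  q ^+ n = 1 -> q != 1 -> \sum_(i < n) q ^+ i = 0.
Proof.
move=> qn q1; have /esym/eqP := subrX1 q n.
by rewrite qn subrr mulf_eq0 subr_eq0 (negbTE q1) => /eqP.
Qed.

Lemma prime_primitive_root (F : idomainType) (n : nat) (z : F) :
  prime n -> z ^+ n = 1 -> z != 1 -> n.-primitive_root z.
Proof.
move=> pn zn z1; have [m pm mn] := prim_order_exists (prime_gt0 pn) zn.
case/primeP: pn => _ /(_ m mn) /orP[/eqP m1|/eqP <- //].
by move: z1; rewrite -(prim_expr_order pm) m1 expr1 eqxx.
Qed.

Lemma sum_prim_root_orth (F : fieldType) (P : nat) (w : F) (b b' : 'Z_P) :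
  (1 < P)%N -> P.-primitive_root w ->
  \sum_(v : 'Z_P) (w ^+ (v * b))^-1 * w ^+ (v * b') =
  if b == b' then P%:R else 0.
Proof.
move=> P1 pw; have wP := prim_expr_order pw.
have w0 : w != 0.
  apply: contra_eq_neq wP => ->.
  by rewrite expr0n gtn_eqF ?(ltnW P1) // eq_sym oner_neq0.
have [<-|bb'] := eqVneq b b'.
  under eq_bigr do rewrite mulVf ?expf_neq0 //.
  by rewrite sumr_const card_ord Zp_cast.
pose q := w ^+ b' / w ^+ b.
rewrite (eq_bigr (fun v : 'Z_P => q ^+ v)) => [|v _]; last first.
  by rewrite mulrC exprMn exprVn -!exprM !(mulnC v).
apply: sum_expr_root_unity.
  rewrite Zp_cast // exprMn exprVn -!exprM !(mulnC _ P) !exprM wP.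
  by rewrite !expr1n invr1 mulr1.
apply: contra_neq bb' => /(canRL (divfK (expf_neq0 _ w0))); rewrite mul1r => /eqP.
rewrite (eq_prim_root_expr pw) !modn_small -?[X in (_ < X)%N](Zp_cast P1) //.
by move/eqP/val_inj.
Qed.

Lemma Zp_prime_unit (P : nat) (c : 'Z_P) :
  prime P -> c != 0 -> c \is a GRing.unit.
Proof.
move=> pP c0; have P1 := prime_gt1 pP.
have cP : (c < P)%N by rewrite -[X in (_ < X)%N](Zp_cast P1) ltn_ord.
by rewrite -[c]natr_Zp unitZpE // prime_coprime // gtnNdvd // lt0n.
Qed.

Section DotProduct.
Variables (P D : nat).
Implicit Types (a u x y z : {ffun 'I_D -> 'Z_P}).

Lemma dotZDl a u z : dotZ (a + u) z = dotZ a z + dotZ u z.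
Proof. by rewrite /dotZ -big_split; apply: eq_bigr => i _; rewrite ffunE mulrDl. Qed.

Lemma dotZBr a x y : dotZ a (y - x) = dotZ a y - dotZ a x.
Proof. by rewrite /dotZ -sumrB; apply: eq_bigr => i _; rewrite !ffunE mulrBr. Qed.

Lemma dotZ0r a : dotZ a 0 = 0.
Proof. by rewrite /dotZ big1 // => i _; rewrite ffunE mulr0. Qed.

Hypothesis pP : prime P.

Lemma dotZ_onto z t : z != 0 -> exists u, dotZ u z = t.
Proof.
move=> z0; have [i zi] : exists i, z i != 0.
  apply/existsP; apply: contraR z0 => /existsPn z0.
  by apply/eqP/ffunP => j; rewrite ffunE; apply/eqP/negPn.
exists [ffun j => if j == i then t / z i else 0].
rewrite /dotZ (bigD1 i) //= big1 => [|j ji]; last first.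
  by rewrite ffunE (negbTE ji) mul0r.
by rewrite ffunE eqxx addr0 divrK // Zp_prime_unit.
Qed.

Lemma sum_dotZ_uniform (V : zmodType) (F : 'Z_P -> V) z : z != 0 ->
  (\sum_a F (dotZ a z)) *+ #|'Z_P| = (\sum_t F t) *+ #|{ffun 'I_D -> 'Z_P}|.
Proof.
move=> z0; have shift t : \sum_a F (dotZ a z) = \sum_a F (dotZ a z + t).
  have [u <-] := dotZ_onto t z0.
  by rewrite (reindex_inj (addIr u)); apply: eq_bigr => a _; rewrite dotZDl.
rewrite -!sumr_const (eq_bigr _ (fun t _ => shift t)) exchange_big.
apply: eq_big => // a _; rewrite [RHS](reindex_inj (addrI (dotZ a z))).
exact: eq_bigl.
Qed.

End DotProduct.

Section Reconstruction.
Variables (R : realType) (P D : nat) (g r : 'Z_P -> R).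
Implicit Types (a x y z : {ffun 'I_D -> 'Z_P}) (f : {ffun 'I_D -> 'Z_P} -> R).

Lemma Snet_ridgelet_kernel f x :
  Snet g (ridgelet r f) x =
  (P ^ D)%:R^-1 *
  \sum_y f y * \sum_(a : {ffun 'I_D -> 'Z_P}) \sum_c r (dotZ a (y - x) + c) * g c.
Proof.
rewrite -inv_sqrtr_expr_sqr.
transitivity ((Num.sqrt (P%:R : R) ^+ D)^-1 * (Num.sqrt (P%:R : R) ^+ D)^-1 *
    \sum_a \sum_b \sum_y f y * (r (dotZ a y - b) * g (dotZ a x - b))).
  rewrite /Snet -mulrA; congr (_ * _); rewrite mulr_sumr; apply: eq_bigr => a _.
  rewrite mulr_sumr; apply: eq_bigr => b _.
  rewrite /ridgelet -mulrA mulr_suml; congr (_ * _).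
  by apply: eq_bigr => y _; rewrite mulrA.
congr (_ * _).
under eq_bigr do rewrite exchange_big /=.
rewrite exchange_big; apply: eq_bigr => y _; rewrite mulr_sumr; apply: eq_bigr => a _.
by rewrite -mulr_sumr correlation_shift dotZBr.
Qed.

Hypotheses (pP : prime P) (g0 : \sum_b g b = 0).

Lemma sum_correlation_dotZ z : z != 0 ->
  \sum_(a : {ffun 'I_D -> 'Z_P}) \sum_c r (dotZ a z + c) * g c = 0.
Proof.
move=> z0; have := sum_dotZ_uniform pP (fun s => \sum_c r (s + c) * g c) z0.
rewrite sum_correlation g0 mulr0 mul0rn => /eqP.
by rewrite mulrn_eq0 card_ord => /eqP.
Qed.

Lemma Snet_ridgelet f x : Snet g (ridgelet r f) x = f x * \sum_c g c * r c.
Proof.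
rewrite Snet_ridgelet_kernel [\sum_y f y * _](bigD1 x) //=.
rewrite [\sum_(y | y != x) _]big1 => [|y yx]; last first.
  by rewrite sum_correlation_dotZ ?mulr0 // subr_eq0.
rewrite addr0 subrr.
under eq_bigr do (rewrite dotZ0r; under eq_bigr do rewrite add0r mulrC).
rewrite sumr_const; have -> : #|{ffun 'I_D -> 'Z_P}| = (P ^ D)%N.
  by rewrite card_ffun !card_ord Zp_cast // prime_gt1.
rewrite -[(\sum_c _) *+ _]mulr_natl mulrCA mulKf //.
by rewrite pnatr_eq0 expn_eq0 negb_and -lt0n prime_gt0.
Qed.

End Reconstruction.

Local Open Scope complex_scope.

Section Expi.
Variable R : realType.
Implicit Types a b : R.

Lemma expiD a b : expi (a + b) = expi a * expi b.
Proof.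
rewrite /expi cosD sinD; apply/eqP; rewrite eq_complex /=.
by apply/andP; split; apply/eqP; ring.
Qed.

Lemma expi0 : expi (0 : R) = 1.
Proof. by rewrite /expi cos0 sin0. Qed.

Lemma expiN a : expi (- a) = (expi a)^-1.
Proof. by apply/esym/mulr1_eq; rewrite -expiD subrr expi0. Qed.

Lemma expiMn a n : expi (n%:R * a) = expi a ^+ n.
Proof.
elim: n => [|n IHn]; first by rewrite mul0r expi0.
by rewrite -addn1 natrD mulrDl expiD IHn mul1r exprD expr1.
Qed.

Lemma conjc_expi a : conjc (expi a) = expi (- a).
Proof. by rewrite /expi cosN sinN. Qed.

Lemma conjc_expiV a : conjc (expi a)^-1 = expi a.
Proof. by rewrite -expiN conjc_expi opprK. Qed.

Lemma expi_2pi_expr (P : nat) : (0 < P)%N -> expi (2 * pi / P%:R : R) ^+ P = 1.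
Proof.
move=> P0; rewrite -expiMn mulrCA mulfV ?pnatr_eq0 -?lt0n // mulr1 mulr_natl.
by rewrite /expi cos2pi sin2pi.
Qed.

Lemma expi_2pi_neq1 (P : nat) : (1 < P)%N -> expi (2 * pi / P%:R : R) != 1.
Proof.
move=> P1; have P0 : (0 < P%:R :> R) by rewrite ltr0n ltnW.
have pi0 := pi_gt0 R.
apply/eqP => /eqP; rewrite /expi eq_complex /= => /andP[/eqP cos1 _].
have : 2 * pi / P%:R = 0 :> R.
  apply: cos_inj; rewrite ?cos1 ?cos0 // !in_itv /= ?lexx ?(ltW pi0) //.
  rewrite divr_ge0 ?mulr_ge0 ?(ltW pi0) ?(ltW P0) //=.
  by rewrite ler_pdivrMr // mulrC ler_pM2l // ler_nat.
by apply/eqP; rewrite !mulf_neq0 ?invr_eq0 ?gt_eqF.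
Qed.

Lemma expi_2pi_prim (P : nat) :
  prime P -> P.-primitive_root (expi (2 * pi / P%:R : R)).
Proof.
move=> pP; apply: prime_primitive_root => //.
  exact: expi_2pi_expr (prime_gt0 pP).
exact: expi_2pi_neq1 (prime_gt1 pP).
Qed.

End Expi.

Section Fourier.
Variables (R : realType) (P : nat).
Hypothesis pP : prime P.

Let w : R[i] := expi (2 * pi / P%:R).
Let c : R[i] := ((Num.sqrt (P%:R : R))^-1)%:C.

Lemma F1E (h : 'Z_P -> R[i]) v : F1 h v = c * \sum_b h b * (w ^+ (v * b))^-1.
Proof.
congr (_ * _); apply: eq_bigr => b _.
by rewrite -expiMn -expiN; congr (_ * expi (- _)); rewrite mulrAC mulrC.
Qed.

Lemma conjc_F1 (h : 'Z_P -> R[i]) v :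
  conjc (F1 h v) = c * \sum_b conjc (h b) * w ^+ (v * b).
Proof.
(* [rmorphM] exposes [conjc] as an rmorphism, which [rewrite] with the [conjc]
   lemmas does not match syntactically; those steps are closed by conversion. *)
rewrite F1E rmorphM rmorph_sum; congr (_ * _); first exact: conjc_real.
apply: eq_bigr => b _; rewrite rmorphM -expiMn; congr (_ * _); exact: conjc_expiV.
Qed.

Lemma F1_Plancherel (h k : 'Z_P -> R[i]) :
  \sum_v F1 h v * conjc (F1 k v) = \sum_b h b * conjc (k b).
Proof.
have ccP : c * c * P%:R = 1.
  have := inv_sqrtr_expr_sqr R P 1; rewrite expr1 expn1 => normP.
  rewrite -[P%:R](rmorph_nat (real_complex R)) -!rmorphM normP.
  by rewrite mulVf // pnatr_eq0 -lt0n prime_gt0.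
transitivity (c * c * \sum_b \sum_b' h b * conjc (k b') *
                \sum_(v : 'Z_P) (w ^+ (v * b))^-1 * w ^+ (v * b')).
  rewrite (eq_bigr (fun v : 'Z_P => c * c * \sum_b \sum_b'
      h b * conjc (k b') * ((w ^+ (v * b))^-1 * w ^+ (v * b')))) => [|v _].
    rewrite -mulr_sumr exchange_big /=; congr (_ * _); apply: eq_bigr => b _.
    by rewrite exchange_big /=; apply: eq_bigr => b' _; rewrite mulr_sumr.
  rewrite F1E conjc_F1 mulrACA mulr_suml; congr (_ * _); apply: eq_bigr => b _.
  by rewrite mulr_sumr; apply: eq_bigr => b' _; rewrite mulrACA.
have orth := sum_prim_root_orth _ _ (prime_gt1 pP) (expi_2pi_prim R pP).
under eq_bigr => b _.
  rewrite (bigD1 b) //= orth eqxx big1 ?addr0 => [|b' b'b]; last first.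
    by rewrite orth eq_sym (negbTE b'b) mulr0.
  over.
by rewrite -mulr_suml mulrA mulrAC ccP mul1r.
Qed.

End Fourier.

Lemma Cgr_real (R : realType) (P : nat) (g r : 'Z_P -> R) :
  prime P -> Cgr g r = (\sum_b g b * r b)%:C.
Proof.
move=> pP; rewrite /Cgr F1_Plancherel // rmorph_sum; apply: eq_bigr => b _.
by rewrite conjc_real rmorphM.
Qed.

Theorem theorem2 (R : realType) (P D : nat) (g r : 'Z_P -> R) :
  prime P -> (1 <= D)%N ->
  \sum_(b : 'Z_P) g b = 0 ->
  \sum_(b : 'Z_P) `|g b| ^+ 2 = 1 ->
  \sum_(b : 'Z_P) `|r b| ^+ 2 = 1 ->
  Cgr g r != 0 ->
  forall (f : {ffun 'I_D -> 'Z_P} -> R) (x : {ffun 'I_D -> 'Z_P}),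
    (f x)%:C = (Cgr g r)^-1 * (Snet g (ridgelet r f) x)%:C.
Proof.
move=> pP _ g0 _ _ C0 f x.
rewrite Snet_ridgelet // Cgr_real // in C0 *.
by rewrite rmorphM mulrCA mulVf // mulr1.
Qed.
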